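(* Every threshold tolerance graph is a pairwise compatibility graph.
   Context: All graphs are finite and simple. A graph $G=(V,E)$ is a threshold tolerance graph if there exist functions $g,t:V\to\mathbb{R}^+$ (positive reals) such that for all distinct $x,y\in V$, $\{x,y\}\in E$ if and only if $g(x)+g(y)\ge\min(t(x),t(y))$. A graph $G=(V,E)$ is a pairwise compatibility graph (PCG) if there exist a tree $T$ with non-negative real edge weights, whose set of leaves is exactly $V$, and two non-negative real numbers $d_{min}\le d_{max}$ such that for all distinct $u,v\in V$, $(u,v)\in E$ if and only if $d_{min}\le d_T(u,v)\le d_{max}$, where $d_T(u,v)$ is the sum of the weights of the edges on the unique path from $u$ to $v$ in $T$. *)

From HB Require Import structures.
From mathcomp Require Import all_boot all_order all_algebra.
From mathcomp Require Import reals.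
Set Implicit Arguments. Unset Strict Implicit. Unset Printing Implicit Defensive.
Import Order.TTheory GRing.Theory Num.Theory.
Local Open Scope ring_scope.

Definition simple_graph (V : finType) (E : rel V) : Prop :=
  symmetric E /\ irreflexive E.

Definition threshold_tolerance (R : realType) (V : finType) (E : rel V) : Prop :=
  exists g t : V -> R,
    (forall x, 0 < g x) /\ (forall x, 0 < t x) /\
    forall x y, x != y -> (E x y <-> Num.min (t x) (t y) <= g x + g y).

Definition simple_path (N : finType) (adj : rel N) (a b : N) (p : seq N) : bool :=
  [&& path adj a p, last a p == b & uniq (a :: p)].

Definition is_tree (N : finType) (adj : rel N) : Prop :=
  simple_graph adj /\
  (forall a b : N, exists p, simple_path adj a b p) /\
  (forall (a b : N) p q, simple_path adj a b p -> simple_path adj a b q -> p = q).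

(* Leaves: vertices of degree at most 1 (degree 0 only occurs for the
   one-vertex tree). *)
Definition leaf (N : finType) (adj : rel N) (n : N) : bool :=
  (#|[set m | adj n m]| <= 1)%N.

Definition path_weight (R : realType) (N : finType) (w : N -> N -> R)
    (a : N) (p : seq N) : R :=
  \sum_(x <- pairmap w a p) x.

Definition tree_dist (R : realType) (N : finType) (adj : rel N)
    (w : N -> N -> R) (a b : N) (d : R) : Prop :=
  exists p, simple_path adj a b p /\ d = path_weight w a p.

Definition pcg (R : realType) (V : finType) (E : rel V) : Prop :=
  exists (N : finType) (adj : rel N) (w : N -> N -> R) (f : V -> N)
         (dmin dmax : R),
    is_tree adj /\
    (forall a b, w a b = w b a) /\ (forall a b, 0 <= w a b) /\
    injective f /\ (forall n, leaf adj n <-> exists x, f x = n) /\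
    0 <= dmin /\ dmin <= dmax /\
    forall u v, u != v ->
      (E u v <-> exists d, tree_dist adj w (f u) (f v) d /\ dmin <= d <= dmax).

(* Sort the vertices by tolerance, t_0 <= ... <= t_(n-1), and build a caterpillar:
   a spine s_0 ... s_(n-1) whose edge s_k s_(k+1) has weight t_(k+1) - t_k, and a
   leaf l_i attached to s_i by an edge of weight 2 g_i + M - t_i, with M the sum of
   all tolerances.  For i < j the distance between l_i and l_j is
   2 (g_i + g_j) + 2 M - 2 t_i = 2 (g_i + g_j - min (t_i, t_j)) + 2 M,
   which is at least 2 M exactly when the i-th and j-th vertices are adjacent;
   the upper bound 2 M + 4 (sum of the g) is never binding.  The spine must have at least two
   vertices for s_0 not to be a leaf, so graphs with at most one vertex are
   treated separately.  That the caterpillar is a tree is derived from its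
   description by a parent function that strictly decreases a height. *)

From mathcomp Require Import all_boot all_order all_algebra.
From mathcomp Require Import reals.
From mathcomp Require Import lra.
Set Implicit Arguments. Unset Strict Implicit. Unset Printing Implicit Defensive.
Import Order.TTheory GRing.Theory Num.Theory.

Definition parent_rel (N : finType) (root : N) (par : N -> N) : rel N :=
  fun u v => (u != root) && (par u == v) || (v != root) && (par v == u).

Definition descends (N : Type) (par : N -> N) (u c : N) : Prop :=
  exists k, iter k par u = c.

Lemma parent_rel_sym (N : finType) (root : N) (par : N -> N) :
  symmetric (parent_rel root par).
Proof. by move=> u v; rewrite /parent_rel orbC. Qed.

Lemma descends_par (N : eqType) (par : N -> N) u c :
  u != c -> descends par u c <-> descends par (par u) c.
Proof.
move=> uc; split.
- case=> [[|k]]; first by move=> /= e; rewrite e eqxx in uc.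
  by rewrite iterSr => e; exists k.
- by case=> k e; exists k.+1; rewrite iterSr.
Qed.

Lemma descends_total (N : Type) (par : N -> N) z x y :
  descends par z x -> descends par z y -> descends par x y \/ descends par y x.
Proof.
case=> k <-; case=> m <-; case: (leqP k m) => km.
- by left; exists (m - k); rewrite -iterD subnK.
- by right; exists (k - m); rewrite -iterD subnK // ltnW.
Qed.

(* The only edge leaving the subtree below [c] is the one from [c] to [par c]. *)
Lemma descends_edge (N : finType) root (par : N -> N) u v c :
  parent_rel root par u v -> u != par c -> v != par c ->
  descends par u c <-> descends par v c.
Proof.
move=> /orP[/andP[_ /eqP e]|/andP[_ /eqP e]] hu hv.
- have uc : u != c by apply: contraNneq hv => ucE; rewrite -e ucE.
  by rewrite -e; apply: descends_par.
- have vc : v != c by apply: contraNneq hu => vcE; rewrite -e vcE.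
  by rewrite -e; symmetry; apply: descends_par.
Qed.

Lemma descends_last (N : finType) root (par : N -> N) c x p :
  path (parent_rel root par) x p -> par c \notin x :: p ->
  descends par (last x p) c <-> descends par x c.
Proof.
elim: p x => [|y p IH] x //= /andP[hxy hp].
rewrite inE negb_or => /andP[hx hyp].
have hy : par c != y by move: hyp; rewrite inE negb_or => /andP[].
by rewrite IH //; symmetry; apply: (descends_edge hxy); rewrite eq_sym.
Qed.

Section ParentTree.
Variables (N : finType) (root : N) (par : N -> N) (h : N -> nat).
Hypothesis par_root : par root = root.
Hypothesis height_par : forall u, u != root -> h (par u) < h u.
Local Notation adj := (parent_rel root par).

Lemma height_par_le u : h (par u) <= h u.
Proof. by case: (eqVneq u root) => [->|/height_par/ltnW //]; rewrite par_root. Qed.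

Lemma height_descends u c : descends par u c -> h c <= h u.
Proof. by case=> k <-; elim: k => //= k IH; apply: leq_trans (height_par_le _) IH. Qed.

Lemma descends_sibling x y : descends par x y -> par x = par y -> y != root -> x = y.
Proof.
case=> [[|k]] //; rewrite iterSr => e pxy yr.
have := height_par yr; rewrite -pxy ltnNge.
by rewrite (height_descends (ex_intro _ k e)).
Qed.

Lemma last_path_descends c p :
  path adj c p -> par c \notin c :: p -> descends par (last c p) c.
Proof. by move=> hp hc; apply/(descends_last hp hc); exists 0. Qed.

Lemma no_fork_parent a x y p q : par a = x -> par y = a -> y != root ->
  path adj x p -> path adj y q -> a \notin x :: p -> a \notin y :: q ->
  last x p = last y q -> False.
Proof.
move=> ex ey yr hp hq ap aq el.
have hxy : descends par x y.
  apply/(descends_last hp); first by rewrite ey.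
  by rewrite el; apply: last_path_descends; rewrite ?ey.
have := height_descends hxy; rewrite -ex => /leq_trans/(_ (height_par_le a)).
by rewrite -ey leqNgt height_par.
Qed.

Lemma no_fork a x y p q : adj a x -> adj a y ->
  path adj x p -> path adj y q -> a \notin x :: p -> a \notin y :: q ->
  last x p = last y q -> x = y.
Proof.
case/orP=> [/andP[_ /eqP ex]|/andP[xr /eqP ex]];
  case/orP=> [/andP[_ /eqP ey]|/andP[yr /eqP ey]] hp hq ap aq el.
- by rewrite -ex -ey.
- by case: (no_fork_parent ex ey yr hp hq ap aq el).
- by case: (no_fork_parent ey ex xr hq hp aq ap (esym el)).
have [dx dy] : descends par (last x p) x /\ descends par (last x p) y.
  by split; [|rewrite el]; apply: last_path_descends; rewrite ?ex ?ey.
have sib : par x = par y by rewrite ex ey.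
case: (descends_total dx dy) => [dxy|dyx]; first exact: descends_sibling dxy sib yr.
by rewrite (descends_sibling dyx (esym sib) xr).
Qed.

Lemma connect_root u : connect adj u root.
Proof.
elim: {u}(h u) {-2}u (leqnn (h u)) => [|k IH] u hu.
all: case: (eqVneq u root) => [->|ur]; first exact: connect0.
  by have := height_par ur; rewrite ltnNge (leq_trans hu (leq0n _)).
apply: connect_trans (IH (par u) _); first by apply: connect1; rewrite /parent_rel ur eqxx.
by rewrite -ltnS (leq_trans (height_par ur)).
Qed.

Lemma parent_rel_path_uniq a b p q :
  simple_path adj a b p -> simple_path adj a b q -> p = q.
Proof.
elim: p a q => [|x p IH] a [|y q] /and3P[hp /eqP hl hu] /and3P[hq /eqP hl' hu'] //.
- by move: hu' => /= /andP[/negP[]]; rewrite (_ : a = b) // -hl' /= mem_last.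
- by move: hu => /= /andP[/negP[]]; rewrite (_ : a = b) // -hl /= mem_last.
move: hp hq hl hl' hu hu' => /= /andP[hax hp] /andP[hay hq] hl hl'.
case/andP=> ap hu /andP[aq hu'].
have exy : x = y by apply: (no_fork hax hay hp hq ap aq); rewrite hl hl'.
rewrite -exy in hq hl' hu' *; congr (_ :: _); apply: (IH x).
  by rewrite /simple_path hp hl eqxx.
by rewrite /simple_path hq hl' eqxx.
Qed.

Lemma parent_rel_tree : is_tree adj.
Proof.
have irr : irreflexive adj.
  move=> u; rewrite /parent_rel orbb; apply/negP => /andP[ur /eqP e].
  by have := height_par ur; rewrite e ltnn.
have sym := parent_rel_sym root par.
split=> //; split; last exact: parent_rel_path_uniq.
move=> a b; have : connect adj a b.
  apply: connect_trans (connect_root a) _.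
  by rewrite (sym_connect_sym sym) connect_root.
case/connectP => p hp ->; case: (shortenP hp) => p' hp' hu _.
by exists p'; rewrite /simple_path hp' hu eqxx.
Qed.
End ParentTree.

Local Open Scope ring_scope.

Section PathWeight.
Variables (R : realType) (N : finType) (w : N -> N -> R).

Lemma path_weight_nil a : path_weight w a [::] = 0.
Proof. by rewrite /path_weight big_nil. Qed.

Lemma path_weight_cons a x p : path_weight w a (x :: p) = w a x + path_weight w x p.
Proof. by rewrite /path_weight /= big_cons. Qed.

Lemma path_weight_cat a p q :
  path_weight w a (p ++ q) = path_weight w a p + path_weight w (last a p) q.
Proof.
elim: p a => [|x p IH] a /=; first by rewrite path_weight_nil add0r.
by rewrite !path_weight_cons IH addrA.
Qed.

Lemma path_weight_rev a p : (forall u v, w u v = w v u) ->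
  path_weight w (last a p) (rev (belast a p)) = path_weight w a p.
Proof.
move=> wsym; elim: p a => [|x p IH] a //=.
rewrite rev_cons -cats1 path_weight_cat IH path_weight_cons path_weight_nil.
have -> : last (last x p) (rev (belast x p)) = x.
  by case: p {IH} => //= y p; rewrite rev_cons last_rcons.
by rewrite addr0 wsym addrC path_weight_cons.
Qed.

End PathWeight.

Lemma path_weight_telescope (R : realType) (N : finType) (phi : N -> R) a p :
  path (fun u v => phi u <= phi v) a p ->
  path_weight (fun u v => `|phi u - phi v|) a p = phi (last a p) - phi a.
Proof.
elim: p a => [|b p IH] a /=; first by rewrite path_weight_nil subrr.
rewrite path_weight_cons => /andP[ab /IH ->].
rewrite distrC ger0_norm ?subr_ge0 //.
by rewrite addrC addrA subrK.
Qed.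

Lemma simple_path_rev (N : finType) (adj : rel N) a b p : symmetric adj ->
  simple_path adj a b p -> simple_path adj b a (rev (belast a p)).
Proof.
move=> sym /and3P[hp /eqP hl hu]; rewrite /simple_path -hl.
rewrite rev_path -rev_rcons -lastI rev_uniq hu andbT.
apply/andP; split; first by apply: sub_path hp => x y; rewrite sym.
by case: p {hp hl hu} => //= y p; rewrite rev_cons last_rcons.
Qed.

Lemma tree_dist_sym (R : realType) (N : finType) (adj : rel N) (w : N -> N -> R) a b d :
  symmetric adj -> (forall u v, w u v = w v u) ->
  tree_dist adj w a b d -> tree_dist adj w b a d.
Proof.
move=> sym wsym [p [hp ->]]; exists (rev (belast a p)); split.
  exact: simple_path_rev.
by move: hp => /and3P[_ /eqP <- _]; rewrite path_weight_rev.
Qed.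

Lemma tree_dist_path (R : realType) (N : finType) (adj : rel N) (w : N -> N -> R) a b p d :
  is_tree adj -> simple_path adj a b p ->
  tree_dist adj w a b d <-> d = path_weight w a p.
Proof.
move=> [_ [_ uniq_path]] hp; split; last by move->; exists p.
by case=> q [hq ->]; rewrite (uniq_path _ _ _ _ hq hp).
Qed.

Lemma pcg_card_le1 (R : realType) (V : finType) (E : rel V) : (#|V| <= 1)%N -> pcg R E.
Proof.
move=> V1; have eqV (a b : V) : a = b by apply: (card_le1_eqP V1).
exists V, [rel _ _ | false], (fun _ _ => 0 : R), id, 0, 0.
split.
  split; first by split.
  split; first by move=> a b; exists [::]; rewrite /simple_path (eqV a b) /= eqxx.
  by move=> a b [|x p] [|y q] //= /andP[].
do 3 split => //.
split; first by move=> u; split=> [_|_]; [exists u | rewrite /leaf (leq_trans (max_card _))].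
do 2 split => //.
by move=> u v; rewrite (eqV u v) eqxx.
Qed.

Lemma pcg_bij (R : realType) (V W : finType) (E : rel V) (F : rel W)
   (r : V -> W) (s : W -> V) : cancel r s -> cancel s r ->
   (forall u v, u != v -> (E u v <-> F (r u) (r v))) -> pcg R F -> pcg R E.
Proof.
move=> rs sr EF [N [adj [w [f [dmin [dmax [Ht [Hs [Hw [Hi [Hl [H0 [Hd Hc]]]]]]]]]]]]].
exists N, adj, w, (f \o r), dmin, dmax.
do 3 split => //.
split; first exact: inj_comp Hi (can_inj rs).
split.
  move=> m; rewrite Hl; split; case=> x <-; last by exists (r x).
  by exists (s x); rewrite /= sr.
do 2 split => //.
move=> u v uv; rewrite EF //; apply: Hc.
by apply: contra uv => /eqP /(can_inj rs) ->.
Qed.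

Lemma ler_term_sum (R : numDomainType) (I : finType) (F : I -> R) k :
  (forall i, 0 <= F i) -> F k <= \sum_i F i.
Proof. by move=> F_ge0; rewrite (bigD1 k) //= lerDl sumr_ge0. Qed.

Section Caterpillar.
Variables (R : realType) (n : nat) (G T : 'I_n.+2 -> R).
Hypothesis G_gt0 : forall i, 0 < G i.
Hypothesis T_gt0 : forall i, 0 < T i.
Hypothesis T_mono : forall i j : 'I_n.+2, (i <= j)%N -> T i <= T j.

(* [(false, i)] is the i-th spine vertex and [(true, i)] the leaf attached to it. *)
Local Notation node := (bool * 'I_n.+2)%type.

Definition cat_root : node := (false, ord0).
Definition cat_par (u : node) : node := (false, if u.1 then u.2 else inord u.2.-1).
Definition cat_height (u : node) : nat := u.1 + u.2.
Definition cat_adj : rel node := parent_rel cat_root cat_par.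
Definition spine (k : nat) : node := (false, inord k).

Lemma cat_par_root : cat_par cat_root = cat_root.
Proof. by congr (_, _); apply: val_inj; rewrite /= inordK. Qed.

Lemma cat_height_par u : u != cat_root -> (cat_height (cat_par u) < cat_height u)%N.
Proof.
case: u => [[] i] //; rewrite /cat_height /= xpair_eqE /= -val_eqE /= -lt0n => i_gt0.
by rewrite inordK ?ltn_predL // (leq_ltn_trans (leq_pred i)).
Qed.

Lemma cat_tree : is_tree cat_adj.
Proof. exact: parent_rel_tree cat_par_root cat_height_par. Qed.

Lemma cat_adj_spine k : (k.+1 < n.+2)%N -> cat_adj (spine k) (spine k.+1).
Proof.
move=> hk; apply/orP; right; rewrite /cat_par /spine /cat_root /= !xpair_eqE /=.
by rewrite -val_eqE /= !inordK //= (ltn_trans _ hk).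
Qed.

Lemma path_spine (e : rel node) i k :
  (forall j, (j.+1 < n.+2)%N -> e (spine j) (spine j.+1)) -> (i + k < n.+2)%N ->
  path e (spine i) (map spine (iota i.+1 k)).
Proof.
move=> he; elim: k i => [|k IH] i hk //=.
rewrite he ?IH ?addSnnS //.
by rewrite (leq_ltn_trans _ hk) // -addn1 leq_add2l.
Qed.

Lemma last_spine i k : last (spine i) (map spine (iota i.+1 k)) = spine (i + k).
Proof. by elim: k i => [|k IH] i /=; rewrite ?addn0 // IH addSnnS. Qed.

Lemma uniq_spine i k : (i + k <= n.+2)%N -> uniq (map spine (iota i k)).
Proof.
move=> hk; rewrite map_inj_in_uniq ?iota_uniq // => a b.
rewrite !mem_iota => /andP[_ ha] /andP[_ hb] [] /(congr1 (@nat_of_ord _)).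
by rewrite !inordK // (leq_trans _ hk).
Qed.

Lemma spine_ord (i : 'I_n.+2) : spine i = (false, i).
Proof. by rewrite /spine inord_val. Qed.

Definition leaf_path (i j : 'I_n.+2) : seq node :=
  map spine (iota i (j - i).+1) ++ [:: (true, j)].

Lemma leaf_path_simple (i j : 'I_n.+2) :
  (i < j)%N -> simple_path cat_adj (true, i) (true, j) (leaf_path i j).
Proof.
move=> ij; have hk : (i + (j - i) < n.+2)%N by rewrite subnKC // ltnW.
have end_j : spine (i + (j - i)) = (false, j) by rewrite subnKC ?spine_ord // ltnW.
apply/and3P; split.
- rewrite /leaf_path /= cat_path (path_spine cat_adj_spine hk) last_spine end_j.
  by rewrite spine_ord /= /cat_adj /parent_rel /= !eqxx !orbT.
- by rewrite /leaf_path /= last_cat.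
have spine_false k : (true, k) \notin map spine (iota i (j - i).+1).
  by apply/mapP => -[].
rewrite /leaf_path -cat_cons cat_uniq cons_uniq spine_false uniq_spine ?addnS //.
rewrite /= orbF andbT inE negb_or spine_false andbT xpair_eqE /=.
by rewrite -val_eqE /= neq_ltn ij orbT.
Qed.

Definition tsum : R := \sum_i T i.
Definition gsum : R := \sum_i G i.

(* Edge weights are differences of a potential: [T] on the spine, where it is
   monotone, and [2 G i + tsum] at the leaf [i], which dominates every [T]. *)
Definition cat_pot (u : node) : R := if u.1 then 2 * G u.2 + tsum else T u.2.
Definition cat_weight (u v : node) : R := `|cat_pot u - cat_pot v|.

Definition leaf_dist (i j : 'I_n.+2) : R :=
  2 * (G i + G j) + 2 * tsum - 2 * Num.min (T i) (T j).

Lemma leaf_path_weight (i j : 'I_n.+2) :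
  (i < j)%N -> path_weight cat_weight (true, i) (leaf_path i j) = leaf_dist i j.
Proof.
move=> ij; have hk : (i + (j - i) < n.+2)%N by rewrite subnKC // ltnW.
have end_j : spine (i + (j - i)) = (false, j) by rewrite subnKC ?spine_ord // ltnW.
have spine_mono k : (k.+1 < n.+2)%N ->
    cat_pot (spine k) <= cat_pot (spine k.+1).
  by move=> hk1; apply: T_mono; rewrite !inordK // ltnW.
rewrite /leaf_path /= path_weight_cons path_weight_cat.
rewrite path_weight_telescope ?(path_spine spine_mono hk) // last_spine end_j.
rewrite path_weight_cons path_weight_nil spine_ord /cat_weight /cat_pot /=.
have pot_ge k : 0 <= 2 * G k + tsum - T k.
  rewrite subr_ge0 (le_trans (ler_term_sum _ _)) ?lerDr ?mulr_ge0 ?ltW //.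
  by move=> l; apply: ltW.
rewrite (ger0_norm (pot_ge i)) distrC (ger0_norm (pot_ge j)).
by rewrite /leaf_dist (min_l (T_mono (ltnW ij))); lra.
Qed.

Lemma cat_dist (i j : 'I_n.+2) d : i != j ->
  tree_dist cat_adj cat_weight (true, i) (true, j) d <-> d = leaf_dist i j.
Proof.
have dist_lt (k l : 'I_n.+2) e : (k < l)%N ->
    tree_dist cat_adj cat_weight (true, k) (true, l) e <-> e = leaf_dist k l.
  by move=> kl; rewrite (tree_dist_path _ _ cat_tree (leaf_path_simple kl)) leaf_path_weight.
rewrite neq_ltn => /orP[/dist_lt //|ji].
have -> : leaf_dist i j = leaf_dist j i by rewrite /leaf_dist minC [G i + _]addrC.
have wsym u v : cat_weight u v = cat_weight v u by rewrite /cat_weight distrC.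
by rewrite -dist_lt //; split; apply: tree_dist_sym => //; apply: parent_rel_sym.
Qed.

Lemma cat_leaf u : leaf cat_adj u = u.1.
Proof.
case: u => [[] i] /=.
  apply: leq_trans (subset_leq_card (_ : _ \subset [set (false, i)])) _; rewrite ?cards1 //.
  apply/subsetP => v; rewrite !inE /cat_adj /parent_rel /cat_par /= !xpair_eqE /=.
  by rewrite andbF orbF eq_sym.
have [v adj_v v_leaf] : exists2 v, cat_adj (false, i) v & v != (true, i).
  case: (posnP i) => [i0|i_gt0].
    have -> : i = ord0 by apply: val_inj.
    by exists (spine 1) => //; rewrite -(spine_ord ord0); apply: cat_adj_spine.
  exists (cat_par (false, i)) => //.
  by rewrite /cat_adj /parent_rel eqxx xpair_eqE /= -val_eqE /= -lt0n i_gt0.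
apply/negbTE; rewrite /leaf -ltnNge.
have sub : [set ((true, i) : node); v] \subset [set m | cat_adj (false, i) m].
  by rewrite subUset !sub1set !inE adj_v /cat_adj /parent_rel /= eqxx orbT.
by apply: leq_trans (subset_leq_card sub); rewrite cards2 eq_sym v_leaf.
Qed.

Lemma pcg_caterpillar : pcg R [rel i j : 'I_n.+2 | Num.min (T i) (T j) <= G i + G j].
Proof.
have tsum_ge0 : 0 <= tsum by rewrite sumr_ge0 // => i _; apply: ltW.
have gsum_ge0 : 0 <= gsum by rewrite sumr_ge0 // => i _; apply: ltW.
exists node, cat_adj, cat_weight, (fun i => (true, i)), (2 * tsum), (2 * tsum + 4 * gsum).
split; first exact: cat_tree.
split; first by move=> u v; rewrite /cat_weight distrC.
split; first by move=> u v; rewrite /cat_weight normr_ge0.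
split; first by move=> i j [].
split.
  case=> [[] i]; rewrite cat_leaf; first by split=> // _; exists i.
  by split=> // -[x] [].
split; first by rewrite mulr_ge0.
split; first by rewrite lerDl mulr_ge0.
move=> i j ij /=; split=> [hE|[d [/(cat_dist _ ij) -> /andP[]]]]; last first.
  by rewrite /leaf_dist; lra.
exists (leaf_dist i j); split; first exact/cat_dist.
have Gi := ler_term_sum i (fun k => ltW (G_gt0 k)).
have Gj := ler_term_sum j (fun k => ltW (G_gt0 k)).
have min_gt0 : 0 < Num.min (T i) (T j) by rewrite lt_min !T_gt0.
by rewrite /leaf_dist /gsum in Gi Gj *; apply/andP; split; lra.
Qed.

End Caterpillar.

Lemma sorted_ord_bij (R : realDomainType) (V : finType) (t : V -> R) m :
  #|V| = m.+1 -> exists (r : V -> 'I_m.+1) (s : 'I_m.+1 -> V),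
  [/\ cancel r s, cancel s r & forall i j : 'I_m.+1, (i <= j)%N -> t (s i) <= t (s j)].
Proof.
move=> cardV; pose leT x y := t x <= t y.
pose l := sort leT (enum V).
have size_l : size l = m.+1 by rewrite size_sort -cardE.
have uniq_l : uniq l by rewrite sort_uniq enum_uniq.
have mem_l x : x \in l by rewrite mem_sort mem_enum.
have sorted_l : sorted leT l by apply: sort_sorted => x y; apply: le_total.
have /card_gt0P[x0 _] : (0 < #|V|)%N by rewrite cardV.
exists (fun x => inord (index x l)), (fun i => nth x0 l i); split.
- by move=> x; rewrite inordK ?nth_index // -size_l index_mem.
- by move=> i; apply: val_inj; rewrite /= index_uniq ?size_l // inordK.
move=> i j ij; apply: (sorted_leq_nth (leT := leT)) => //; rewrite ?inE ?size_l //.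
- by move=> x y z; apply: le_trans.
- by move=> x; apply: lexx.
Qed.

Theorem theorem3 (R : realType) (V : finType) (E : rel V) :
  simple_graph E -> threshold_tolerance R E -> pcg R E.
Proof.
move=> _ [g [t [g_gt0 [t_gt0 Et]]]].
case: (leqP #|V| 1) => [/pcg_card_le1 //|V_gt1].
have [n cardV] : exists n, #|V| = n.+2 by case: #|V| V_gt1 => [|[|n]] //; exists n.
have [r [s [rs sr t_mono]]] := sorted_ord_bij t cardV.
apply: (pcg_bij rs sr (F := [rel i j | Num.min (t (s i)) (t (s j)) <= g (s i) + g (s j)])).
  by move=> u v uv /=; rewrite !rs; apply: Et.
exact: pcg_caterpillar.
Qed.
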